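(* For every positive integer $n$, $$\sum_{\mathbf a\in\mathsf{PF}_n} t^{\operatorname{run}(\mathbf a)}=\sum_{\mathbf a\in\mathsf{RW}_n} t^{\operatorname{run}(\mathbf a)}.$$
   Context: Let $[n]=\{1,\dots,n\}$ and $\mathbf a=(a_1,\dots,a_n)\in[n]^n$. If $1\in\{a_1,\dots,a_n\}$, $\operatorname{run}(\mathbf a)=\max\{i\in[n]:[i]\subseteq\{a_1,\dots,a_n\}\}$; otherwise $\operatorname{run}(\mathbf a)=0$. $\mathsf{PF}_n$ is the set of $\mathbf a\in[n]^n$ with $|\{j:a_j\le i\}|\ge i$ for all $i\in[n]$ (parking functions). $\mathsf{RW}_n$ is the set of rook words: $\mathbf a\in[n]^n$ with $a_1\le\operatorname{run}(\mathbf a)$. *)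

From mathcomp Require Import all_boot all_order all_algebra.
Set Implicit Arguments. Unset Strict Implicit. Unset Printing Implicit Defensive.
Import GRing.Theory.

(* A word a = (a_1,...,a_n) in [n]^n is represented by a finite function
   a : {ffun 'I_n -> 'I_n.+1} all of whose values are >= 1;
   a_{j+1} is (val (a j)) for j : 'I_n (0-based positions). *)
Definition is_word (n : nat) (a : {ffun 'I_n -> 'I_n.+1}) : bool :=
  [forall j, 0 < (a j : nat)].

Definition occurs (n : nat) (a : {ffun 'I_n -> 'I_n.+1}) (k : nat) : bool :=
  [exists j, (a j : nat) == k].

Definition run (n : nat) (a : {ffun 'I_n -> 'I_n.+1}) : nat :=
  \max_(i < n.+1 | [forall k : 'I_n.+1, ((0 < (k : nat)) && (k <= i)) ==> occurs a k]) (i : nat).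

Definition is_parking (n : nat) (a : {ffun 'I_n -> 'I_n.+1}) : bool :=
  is_word a && [forall i : 'I_n.+1, (0 < (i : nat)) ==> (i <= #|[set j | (a j : nat) <= i]|)].

(* rook words: a_1 <= run(a); a_1 is the value at position 0
   (there is no such position when n = 0, so RW_0 is empty) *)
Definition is_rook_word (n : nat) (a : {ffun 'I_n -> 'I_n.+1}) : bool :=
  is_word a && [exists j : 'I_n, ((j : nat) == 0) && ((a j : nat) <= run a)].

Definition PF (n : nat) := [pred a : {ffun 'I_n -> 'I_n.+1} | is_parking a].
Definition RW (n : nat) := [pred a : {ffun 'I_n -> 'I_n.+1} | is_rook_word a].

(* Split both sides according to the value r of run.  For r = n both sides count
   the words using every letter, which are parking functions and rook words alike.
   For r < n let W_r be the words containing 1, ..., r, m(a) the number of entries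
   <= r, G the number of words of W_r with a_1 <= r, and K the number of words of
   W_(r+1) with a_1 = r + 1.  Rotating the letters r + 1, ..., n cyclically and
   applying the cycle lemma to their multiplicities shows that the orbit of a in
   W_r contains exactly m(a) - r parking functions with run r; summing, and using
   the symmetry in the positions, (n - r) #PF_r = n G - r |W_r|.  Permuting the
   letters within {1..r} and within {r+1..n} gives |W_r| = G + (n - r) K and
   #{a in W_(r+1) | a_1 <= r} = r K, hence #PF_r = G - r K.  A rook word with run r
   is a word of W_r with a_1 <= r that is not in W_(r+1), so #RW_r = G - r K too.
   For the cycle lemma, the good rotations are the strict records of the walk in
   its second period, and their number is the drop of its running minimum over
   one period, i.e. the deficit N - sum c. *)

From mathcomp Require Import all_boot all_order all_algebra.
From mathcomp Require Import zify fingroup perm.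
Import GRing.Theory.
Set Implicit Arguments. Unset Strict Implicit. Unset Printing Implicit Defensive.

Section CycleLemma.
Variables (N K : nat) (c : nat -> nat).
Hypothesis sum_c : \sum_(u < N) c u + K = N.

Definition wrap x := if x < N then x else x - N.

Definition ballot_shift s :=
  (c s == 0) && [forall t : 'I_N.+1, t <= \sum_(w < t) c (wrap (s + w)) + K].

Definition psum x := \sum_(u < x) c (wrap u).

(* The offset [2 * N - x] instead of [- x] keeps the walk in [nat] on [0, 2N]. *)
Definition height x := psum x + (2 * N - x).

Lemma psumS x : psum x.+1 = psum x + c (wrap x).
Proof. by rewrite /psum big_ord_recr. Qed.

Lemma heightS x : x < 2 * N -> height x.+1 + 1 = height x + c (wrap x).
Proof. by move=> lt_x; rewrite /height psumS; lia. Qed.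

Lemma psumD x t : psum (x + t) = psum x + \sum_(w < t) c (wrap (x + w)).
Proof. by rewrite /psum big_split_ord. Qed.

Lemma psumN : psum N + K = N.
Proof.
by rewrite -[in RHS]sum_c /psum; congr (_ + _); apply: eq_bigr => u _; rewrite /wrap ltn_ord.
Qed.

Lemma height_shiftN x : x <= N -> height (N + x) + K = height x.
Proof.
move=> le_xN; rewrite /height psumD.
have -> : \sum_(w < x) c (wrap (N + w)) = psum x.
  apply: eq_bigr => w _; have lt_wN := leq_trans (ltn_ord w) le_xN.
  by rewrite /wrap lt_wN ltnNge leq_addr /= addKn.
by have := psumN; lia.
Qed.

Fixpoint prefix_min y :=
  if y is y'.+1 then minn (prefix_min y') (height y) else height 0.

Lemma prefix_min_le x y : x <= y -> prefix_min y <= height x.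
Proof.
elim: y => [|y IHy] /=; first by rewrite leqn0 => /eqP ->.
rewrite leq_eqVlt => /orP[/eqP -> | lt_xy]; first exact: geq_minr.
exact: leq_trans (geq_minl _ _) (IHy lt_xy).
Qed.

Lemma prefix_min_attained y : exists2 x, x <= y & prefix_min y = height x.
Proof.
elim: y => [|y [x le_xy min_x]] /=; first by exists 0.
rewrite min_x /minn; case: ifP => _; first by exists x; rewrite // leqW.
by exists y.+1.
Qed.

Definition is_record y := [forall x : 'I_y, height y < height x].

Lemma prefix_minS y : y < 2 * N -> prefix_min y = prefix_min y.+1 + is_record y.+1.
Proof.
move=> lt_y; have := heightS lt_y; have := prefix_min_le (leqnn y).
case: (prefix_min_attained y) => x le_xy min_x /=.
case: (boolP (is_record y.+1)) => [/forallP rec | /forallPn[z]].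
- have := rec (Ordinal (le_xy : x < y.+1)); rewrite /= -min_x.
  by rewrite /minn; case: ifP; lia.
- rewrite -leqNgt => le_z; have := prefix_min_le (ltnSE (ltn_ord z)).
  by rewrite /minn; case: ifP; lia.
Qed.

Lemma prefix_min_records j : j <= N ->
  \sum_(s < j) is_record (s + N).+1 + prefix_min (N + j) = prefix_min N.
Proof.
elim: j => [|j IHj] le_jN; first by rewrite big_ord0 addn0.
rewrite big_ord_recr /= -IHj ?(ltnW le_jN) // (prefix_minS (y := N + j)); last by lia.
by rewrite addnS (addnC j N) addnAC -addnA.
Qed.

Lemma prefix_min_shiftN : prefix_min (N + N) + K = prefix_min N.
Proof.
have [x le_xN min_x] := prefix_min_attained N.
have [z le_z min_z] := prefix_min_attained (N + N).
have le_min : prefix_min (N + N) <= height (N + x) by apply: prefix_min_le; lia.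
have := height_shiftN le_xN.
have [le_zN | lt_Nz] := leqP z N; first by have := prefix_min_le le_zN; lia.
have le_zN : z - N <= N by lia.
by have := height_shiftN le_zN; have := prefix_min_le le_zN; rewrite subnKC; lia.
Qed.

Lemma ballot_shiftE s : s < N -> ballot_shift s = is_record (s + N).+1.
Proof.
move=> lt_sN.
have wrap_sN : wrap (s + N) = s by rewrite /wrap ltnNge leq_addl addnK.
have step : height (s + N).+1 + 1 = height (s + N) + c s.
  by rewrite -[in c s]wrap_sN heightS //; lia.
have shift_s := height_shiftN (ltnW lt_sN); rewrite (addnC N s) in shift_s.
have ballotE t : t <= N ->
    (t <= \sum_(w < t) c (wrap (s + w)) + K) = (height (s + N) <= height (s + t)).
  move=> le_tN; have := psumD s t; rewrite /height in shift_s * => sumE.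
  by apply/idP/idP; lia.
rewrite /ballot_shift; apply/andP/forallP => [[/eqP c_s0 /forallP ballot] x | record].
- case: (leqP s x) => [le_sx | lt_xs].
  + have le_xsN : x - s <= N by have := ltn_ord x; lia.
    have := ballot (Ordinal (le_xsN : x - s < N.+1)).
    by rewrite ballotE //= subnKC //; lia.
  + have le_xNs : x + N - s <= N by lia.
    have := ballot (Ordinal (le_xNs : x + N - s < N.+1)).
    rewrite ballotE //= subnKC; last by lia.
    by have := height_shiftN (ltnW (ltn_trans lt_xs lt_sN)); rewrite (addnC N x); lia.
- have := record (Ordinal (ltnSn (s + N))); rewrite /= => c_s0.
  split; first by apply/eqP; lia.
  apply/forallP => t; have le_tN := ltnSE (ltn_ord t); rewrite ballotE //.
  have lt_st : s + t < (s + N).+1 by lia.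
  by have := record (Ordinal lt_st); rewrite /=; lia.
Qed.

Lemma card_ballot_shift : #|[pred s : 'I_N | ballot_shift s]| = K.
Proof.
rewrite -sum1_card big_mkcond /=.
rewrite (eq_bigr (fun s : 'I_N => nat_of_bool (is_record (s + N).+1))); last first.
  by move=> s _; rewrite unfold_in /= ballot_shiftE //; case: is_record.
apply: (@addIn (prefix_min (N + N))).
by rewrite prefix_min_records // addnC prefix_min_shiftN.
Qed.

End CycleLemma.

Lemma sum_ord_eq t w0 : \sum_(w < t) (w == w0 :> nat : nat) = (w0 < t).
Proof.
elim: t => [|t IHt]; first by rewrite big_ord0.
by rewrite big_ord_recr /= IHt ltnS; case: ltngtP.
Qed.

Section Words.
Variable n : nat.
Local Notation word := {ffun 'I_n -> 'I_n.+1}.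

Definition low r (v : 'I_n.+1) := (0 < (v : nat)) && (v <= r).

Definition covers r (a : word) := [forall k, low r k ==> occurs a k].

Definition covering_word r (a : word) := is_word a && covers r a.

Definition nlow r (a : word) := \sum_j low r (a j).

Lemma covers_le r s (a : word) : r <= s -> covers s a -> covers r a.
Proof.
move=> le_rs /forallP cov; apply/forallP => k; apply/implyP => /andP[k_gt0 le_kr].
by apply: (implyP (cov k)); rewrite /low k_gt0 (leq_trans le_kr le_rs).
Qed.

Lemma run_leq (a : word) : run a <= n.
Proof. by apply/bigmax_leqP => i _; rewrite -ltnS. Qed.

Lemma leq_run r (a : word) : r <= n -> (r <= run a) = covers r a.
Proof.
move=> le_rn; apply/idP/idP => [le_r_run | cov_r].
- have : 0 < #|[pred i : 'I_n.+1 | covers i a]|.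
    apply/card_gt0P; exists ord0; rewrite unfold_in /=.
    by apply/forallP => k; rewrite /low lt0n leqn0 andNb.
  move/eq_bigmax_cond => /(_ (fun i : 'I_n.+1 => i : nat))[i0].
  rewrite unfold_in /= => cov_i0 run_i0; move: le_r_run; rewrite /run run_i0.
  by move/covers_le; apply.
- exact: (leq_bigmax_cond (F := fun i : 'I_n.+1 => i : nat) (Ordinal (le_rn : r < n.+1))).
Qed.

Lemma sum_value_range lo hi : hi <= n ->
  \sum_(v : 'I_n.+1) ((lo < v) && (v <= hi) : nat) = hi - lo.
Proof.
elim: hi => [|hi IHhi] lt_hi; first by rewrite big1 // => v _; lia.
rewrite (eq_bigr (fun v : 'I_n.+1 =>
  ((lo < v) && (v <= hi) : nat) + (lo <= hi) * (v == hi.+1 :> nat))) => [|v _]; last by lia.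
by rewrite big_split -big_distrr /= sum_ord_eq IHhi ?(ltnW lt_hi) //; lia.
Qed.

Lemma coversS r (a : word) : r < n -> covers r.+1 a = covers r a && occurs a r.+1.
Proof.
move=> lt_rn; apply/idP/andP => [cov | [/forallP cov occ]].
  split; first exact: covers_le (leqnSn r) cov.
  by move/forallP/(_ (Ordinal (lt_rn : r.+1 < n.+1))): cov; rewrite /low /= leqnn.
apply/forallP => k; apply/implyP => /andP[k_gt0]; rewrite leq_eqVlt ltnS.
by case/orP => [/eqP -> // | le_kr]; apply: (implyP (cov k)); rewrite /low k_gt0.
Qed.

Lemma run_eqE r (a : word) : r < n -> (run a == r) = covers r a && ~~ occurs a r.+1.
Proof.
move=> lt_rn; rewrite eqn_leq andbC leq_run ?(ltnW lt_rn) // leqNgt leq_run //.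
by rewrite coversS //; case: (covers r a).
Qed.

Lemma nlow_card r (a : word) : nlow r a = #|[set j | low r (a j)]|.
Proof. by rewrite -sum1_card big_mkcond; apply: eq_bigr => j _; rewrite inE; case: low. Qed.

Lemma covers_nlow r (a : word) : r <= n -> covers r a -> r <= nlow r a.
Proof.
move=> le_rn /forallP cov; rewrite nlow_card; apply: leq_trans (leq_imset_card a _).
have card_low : #|[set v : 'I_n.+1 | low r v]| = r.
  by rewrite -sum1_card big_mkcond -[RHS]subn0 -(sum_value_range 0 le_rn);
     apply: eq_bigr => v _; rewrite inE.
rewrite -{1}card_low; apply/subset_leq_card/subsetP => v; rewrite inE => low_v.
have /existsP[j /eqP/val_inj a_j] := implyP (cov v) low_v.
by apply/imsetP; exists j; rewrite ?inE a_j.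
Qed.

Lemma covers_card_le r (a : word) : r <= n -> covers r a -> r <= #|[set j | a j <= r]|.
Proof.
move=> le_rn cov; apply: leq_trans (covers_nlow le_rn cov) _; rewrite nlow_card.
by apply/subset_leq_card/subsetP => j; rewrite !inE => /andP[].
Qed.

End Words.

Section Symmetry.
Variable n : nat.
Local Notation word := {ffun 'I_n -> 'I_n.+1}.

Lemma covering_word_perm_pos r (a : word) (s : {perm 'I_n}) :
  covering_word r [ffun j => a (s j)] = covering_word r a.
Proof.
have occE k : occurs [ffun j => a (s j)] k = occurs a k.
  apply/existsP/existsP => [[j] | [j a_j]]; rewrite ?ffunE; first by exists (s j).
  by exists (s^-1 j)%g; rewrite ffunE permKV.
congr andb; last by apply: eq_forallb => k; rewrite occE.
apply/forallP/forallP => pos j; last by rewrite ffunE.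
by have := pos (s^-1 j)%g; rewrite ffunE permKV.
Qed.

Lemma sum_covering_at_pos r (P : pred 'I_n.+1) i j :
  \sum_(a : word) (covering_word r a && P (a i) : nat)
  = \sum_(a : word) (covering_word r a && P (a j) : nat).
Proof.
pose swap (a : word) := [ffun k => a (tperm i j k)].
have swap_inj : injective swap.
  by move=> a b /ffunP eq_ab; apply/ffunP => k; have := eq_ab (tperm i j k); rewrite !ffunE tpermK.
rewrite (reindex_inj swap_inj); apply: eq_bigr => a _.
by rewrite covering_word_perm_pos ffunE tpermL.
Qed.

Lemma sum_covering_nlow r j0 :
  \sum_(a : word) covering_word r a * nlow r a
  = n * \sum_(a : word) (covering_word r a && low r (a j0) : nat).
Proof.
transitivity (\sum_(j < n) \sum_(a : word) (covering_word r a && low r (a j) : nat)).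
  rewrite exchange_big /=; apply: eq_bigr => a _; rewrite big_distrr /=.
  by apply: eq_bigr => j _; rewrite mulnb.
by rewrite (eq_bigr _ (fun j _ => sum_covering_at_pos r (low r) j j0)) sum_nat_const card_ord.
Qed.

Lemma covering_word_perm_val r (a : word) (x y : 'I_n.+1) :
  0 < (x : nat) -> 0 < (y : nat) -> (x <= r) = (y <= r) ->
  covering_word r [ffun j => tperm x y (a j)] = covering_word r a.
Proof.
move=> x_gt0 y_gt0 xy_r.
have pos_tperm v : (0 < (tperm x y v : nat)) = (0 < (v : nat)).
  by case: tpermP => // ->; rewrite x_gt0 y_gt0.
have low_tperm v : low r (tperm x y v) = low r v.
  by rewrite /low pos_tperm; case: tpermP => // ->; rewrite xy_r.
have occE (k : 'I_n.+1) : occurs [ffun j => tperm x y (a j)] k = occurs a (tperm x y k).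
  apply: eq_existsb => j; rewrite ffunE !val_eqE.
  by rewrite -{1}(tpermK x y k) (inj_eq (@perm_inj _ (tperm x y))).
congr andb; first by apply: eq_forallb => j; rewrite ffunE pos_tperm.
apply/forallP/forallP => cov k; apply/implyP => low_k.
  by have := implyP (cov (tperm x y k)); rewrite occE tpermK; apply; rewrite low_tperm.
by rewrite occE; apply: (implyP (cov _)); rewrite low_tperm.
Qed.

Lemma sum_covering_at_value r j0 (x y : 'I_n.+1) :
  0 < (x : nat) -> 0 < (y : nat) -> (x <= r) = (y <= r) ->
  \sum_(a : word) (covering_word r a && (a j0 == x) : nat)
  = \sum_(a : word) (covering_word r a && (a j0 == y) : nat).
Proof.
move=> x_gt0 y_gt0 xy_r; pose swap (a : word) := [ffun j => tperm x y (a j)].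
have swap_inj : injective swap.
  by move=> a b /ffunP eq_ab; apply/ffunP => j; have := eq_ab j; rewrite !ffunE => /perm_inj.
rewrite (reindex_inj swap_inj); apply: eq_bigr => a _.
by rewrite covering_word_perm_val // ffunE (can2_eq (tpermK x y) (tpermK x y)) tpermL.
Qed.

Lemma sum_covering_value_range r j0 lo hi (w : 'I_n.+1) : hi <= n -> 0 < (w : nat) ->
  (forall v, lo < v <= hi -> (v <= r) = (w <= r)) ->
  \sum_(a : word) (covering_word r a && (lo < a j0 <= hi) : nat)
  = (hi - lo) * \sum_(a : word) (covering_word r a && (a j0 == w) : nat).
Proof.
move=> le_hi w_gt0 same_side; rewrite -(sum_value_range lo le_hi) big_distrl /=.
transitivity (\sum_(v : 'I_n.+1) (lo < v <= hi) *
                 \sum_(a : word) (covering_word r a && (a j0 == v) : nat)).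
  rewrite (eq_bigr _ (fun v _ => big_distrr _ _ _)) exchange_big /=.
  apply: eq_bigr => a _; rewrite (bigD1 (a j0)) //= big1 => [|v /negbTE neq_v].
    by rewrite eqxx addn0 andbT mulnC mulnb.
  by rewrite eq_sym neq_v andbF muln0.
apply: eq_bigr => v _; case: (boolP (lo < v <= hi)) => //= v_range.
by rewrite !mul1n (@sum_covering_at_value r j0 v w) ?same_side //; lia.
Qed.

End Symmetry.

Section Rotation.
Variables n r : nat.
Hypothesis lt_rn : r < n.
Local Notation word := {ffun 'I_n -> 'I_n.+1}.
Local Notation N := (n - r).

Definition rot_value s (v : 'I_n.+1) : 'I_n.+1 :=
  if r < v then inord (r.+1 + wrap N (v - r.+1 + N - s)) else v.

Definition rot_upper s (a : word) : word := [ffun j => rot_value s (a j)].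

Definition mult_upper (a : word) u := \sum_j ((r < a j) && (a j - r.+1 == u) : nat).

Lemma rot_valueE s (v : 'I_n.+1) : s < N ->
  (rot_value s v : nat) = if r < v then r.+1 + wrap N (v - r.+1 + N - s) else v.
Proof.
move=> lt_sN; rewrite /rot_value; case: ifP => // lt_rv.
by rewrite inordK // /wrap; have := ltn_ord v; case: ifP; lia.
Qed.

Lemma rot_value_inj s : s < N -> injective (rot_value s).
Proof.
move=> lt_sN x y /(congr1 val) /=; rewrite !rot_valueE // => eq_xy; apply: ord_inj.
by move: eq_xy; have := ltn_ord x; have := ltn_ord y; rewrite /wrap; repeat case: ifP; lia.
Qed.

Lemma rot_upper_inj s : s < N -> injective (rot_upper s).
Proof.
move=> lt_sN a b /ffunP eq_ab; apply/ffunP => j.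
by apply: (rot_value_inj lt_sN); have := eq_ab j; rewrite !ffunE.
Qed.

Lemma rot_value_upper s (v : 'I_n.+1) : s < N -> (r < rot_value s v) = (r < v).
Proof. by move=> lt_sN; rewrite rot_valueE //; case: ifP; lia. Qed.

Lemma low_rot_value s (v : 'I_n.+1) : s < N -> low r (rot_value s v) = low r v.
Proof. by move=> lt_sN; rewrite /low rot_valueE //; case: ifP; lia. Qed.

Lemma occurs_rot_upper s (a : word) k : s < N -> k <= r ->
  occurs (rot_upper s a) k = occurs a k.
Proof.
move=> lt_sN le_kr; apply: eq_existsb => j; rewrite ffunE rot_valueE //.
by case: ifP => // lt_r; apply/eqP/eqP; lia.
Qed.

Lemma covering_word_rot s (a : word) : s < N ->
  covering_word r (rot_upper s a) = covering_word r a.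
Proof.
move=> lt_sN; congr andb.
  by apply: eq_forallb => j; rewrite ffunE rot_valueE //; case: ifP; lia.
apply: eq_forallb => k; case: (boolP (low r k)) => //= /andP[_ le_kr].
exact: occurs_rot_upper.
Qed.

Lemma nlow_rot s (a : word) : s < N -> nlow r (rot_upper s a) = nlow r a.
Proof. by move=> lt_sN; apply: eq_bigr => j _; rewrite ffunE low_rot_value. Qed.

Lemma occurs_rot_first s (a : word) : s < N -> occurs (rot_upper s a) r.+1 = (mult_upper a s != 0).
Proof.
move=> lt_sN; rewrite /mult_upper sum_nat_eq0 negb_forall; apply: eq_existsb => j.
rewrite ffunE rot_valueE //; have := ltn_ord (a j).
by rewrite implyTb eqb0 negbK /wrap; repeat case: ifP => ?; lia.
Qed.

Lemma count_rot_upper s (a : word) t : s < N -> t <= N ->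
  \sum_j ((r < rot_upper s a j) && (rot_upper s a j <= r + t) : nat)
  = \sum_(w < t) mult_upper a (wrap N (s + w)).
Proof.
move=> lt_sN le_tN; rewrite exchange_big /=; apply: eq_bigr => j _.
rewrite ffunE rot_value_upper //; case: (boolP (r < a j)) => //= [lt_r | _]; last by rewrite big1.
have lt_uN : a j - r.+1 < N by have := ltn_ord (a j); lia.
rewrite (eq_bigr (fun w : 'I_t => (w == wrap N (a j - r.+1 + N - s) :> nat : nat))) => [|w _].
  by rewrite sum_ord_eq rot_valueE // lt_r /wrap; case: ifP; lia.
by have := ltn_ord w; rewrite /wrap; do 2?case: ifP; case: eqP; case: eqP; lia.
Qed.

Lemma sum_mult_upper (a : word) : is_word a ->
  \sum_(u < N) mult_upper a u + nlow r a = n.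
Proof.
move=> /forallP word_a; rewrite /mult_upper exchange_big /= /nlow -big_split /=.
rewrite -[RHS]card_ord -sum1_card; apply: eq_bigr => j _.
case: (boolP (r < a j)) => [lt_r | ]; last by rewrite big1 // /low; have := word_a j; lia.
rewrite (eq_bigr (fun u : 'I_N => (u == a j - r.+1 :> nat : nat))) => [|u _].
  by rewrite sum_ord_eq /low; have := ltn_ord (a j); lia.
by rewrite eq_sym.
Qed.

End Rotation.

Definition parking_with_run n r (a : {ffun 'I_n -> 'I_n.+1}) := is_parking a && (run a == r).

Section ParkingCount.
Variables n r : nat.
Hypothesis lt_rn : r < n.
Local Notation word := {ffun 'I_n -> 'I_n.+1}.
Local Notation N := (n - r).

Lemma card_leq_value_split (b : word) t : is_word b ->
  #|[set j | b j <= r + t]| = nlow r b + \sum_j ((r < b j) && (b j <= r + t) : nat).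
Proof.
move=> /forallP word_b; rewrite -sum1_card big_mkcond /nlow -big_split /=.
by apply: eq_bigr => j _; rewrite inE /low; have := word_b j; case: ifP; lia.
Qed.

Lemma parking_with_runE (b : word) : covering_word r b ->
  parking_with_run r b =
  ~~ occurs b r.+1 && [forall t : 'I_N.+1, r + t <= #|[set j | b j <= r + t]|].
Proof.
case/andP => word_b cov_b; rewrite /parking_with_run run_eqE // cov_b andbC /is_parking word_b.
congr andb; apply/forallP/forallP => [parking t | ballot i].
  have le_rt : r + t < n.+1 by have := ltn_ord t; lia.
  case: (posnP (r + t)) => [-> // | rt_gt0].
  by have := parking (Ordinal le_rt); rewrite /= rt_gt0.
apply/implyP => _; case: (leqP i r) => [le_ir | lt_ri].
  exact: covers_card_le (ltnSE (ltn_ord i)) (covers_le le_ir cov_b).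
have lt_iN : i - r < N.+1 by have := ltn_ord i; lia.
by have := ballot (Ordinal lt_iN); rewrite /= subnKC // ltnW.
Qed.

Lemma parking_rot_upperE s (a : word) : s < N -> covering_word r a ->
  parking_with_run r (rot_upper r s a) = ballot_shift N (nlow r a - r) (mult_upper r a) s.
Proof.
move=> lt_sN cov_a.
have le_r_nlow : r <= nlow r a by case/andP: cov_a => _; apply: covers_nlow (ltnW lt_rn).
have /andP[word_rot _] : covering_word r (rot_upper r s a) by rewrite covering_word_rot.
rewrite parking_with_runE ?covering_word_rot // occurs_rot_first // negbK; congr andb.
apply: eq_forallb => t; have le_tN := ltnSE (ltn_ord t).
rewrite card_leq_value_split // nlow_rot // count_rot_upper //.
by apply/idP/idP; lia.
Qed.

Lemma sum_parking_rot_upper (a : word) : covering_word r a ->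
  \sum_(s < N) parking_with_run r (rot_upper r s a) = nlow r a - r.
Proof.
move=> cov_a; have /andP[word_a cov] := cov_a.
have sum_mult : \sum_(u < N) mult_upper r a u + (nlow r a - r) = N.
  by have := sum_mult_upper lt_rn word_a; have := covers_nlow (ltnW lt_rn) cov; lia.
rewrite -[RHS](card_ballot_shift sum_mult) -sum1_card [RHS]big_mkcond.
by apply: eq_bigr => s _; rewrite parking_rot_upperE // unfold_in; case: ballot_shift.
Qed.

Lemma parking_with_run_covering (a : word) : parking_with_run r a -> covering_word r a.
Proof.
case/andP => /andP[word_a _] /eqP run_a.
by rewrite /covering_word word_a -leq_run ?run_a ?leqnn //; exact: ltnW.
Qed.

Lemma sum_parking_with_run :
  N * \sum_(a : word) parking_with_run r a
  = \sum_(a : word) covering_word r a * (nlow r a - r).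
Proof.
transitivity (\sum_(a : word) \sum_(s < N) parking_with_run r (rot_upper r s a)).
  rewrite exchange_big /= [RHS](eq_bigr (fun=> \sum_(a : word) parking_with_run r a)).
    by rewrite sum_nat_const card_ord.
  by move=> s _; rewrite [RHS](reindex_inj (rot_upper_inj lt_rn (ltn_ord s))).
apply: eq_bigr => a _; case: (boolP (covering_word r a)) => [cov_a | not_cov].
  by rewrite sum_parking_rot_upper // mul1n.
rewrite big1 // => s _; apply/eqP; rewrite eqb0; apply: contra not_cov.
by move/parking_with_run_covering; rewrite covering_word_rot.
Qed.

End ParkingCount.

Definition rook_with_run n r (a : {ffun 'I_n -> 'I_n.+1}) := is_rook_word a && (run a == r).

Section RookCount.
Variables n r : nat.
Hypothesis le_rn : r <= n.
Local Notation word := {ffun 'I_n.+1 -> 'I_n.+2}.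
Local Notation N := (n.+1 - r).
Local Notation nwords P := (\sum_(a : word) (P a : nat)).

Lemma is_rook_wordE (a : word) : is_rook_word a = is_word a && (a ord0 <= run a).
Proof.
congr andb; apply/existsP/idP => [[j /andP[/eqP j0 le_a]] | le_a]; last by exists ord0.
by rewrite (_ : ord0 = j) //; apply: ord_inj.
Qed.

Lemma rook_with_run_split (a : word) :
  rook_with_run r a + (covering_word r.+1 a && low r (a ord0))
  = covering_word r a && low r (a ord0).
Proof.
have run_aE := run_eqE a (le_rn : r < n.+1).
rewrite /rook_with_run is_rook_wordE run_aE /covering_word coversS //.
case: (boolP (is_word a)) => //= word_a.
case: (boolP (covers r a)) => cov_a; rewrite /= ?andbF //.
case: (boolP (occurs a r.+1)) => occ_a; rewrite /= ?andbF ?andbT ?addn0 //.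
have /eqP -> : run a == r by rewrite run_aE cov_a occ_a.
by rewrite /low (forallP word_a ord0).
Qed.

Lemma count_covering_first_low_high :
  nwords (covering_word r)
  = nwords (fun a => covering_word r a && low r (a ord0))
    + N * nwords (fun a => covering_word r.+1 a && (a ord0 == r.+1 :> nat)).
Proof.
pose w : 'I_n.+2 := Ordinal (le_rn : r.+1 < n.+2).
have -> : nwords (fun a => covering_word r.+1 a && (a ord0 == r.+1 :> nat))
          = nwords (fun a => covering_word r a && (a ord0 == w)).
  apply: eq_bigr => a _; rewrite -val_eqE /covering_word coversS //=.
  case: (boolP (a ord0 == r.+1 :> nat)) => [a0 | _]; rewrite ?andbF // !andbT.
  by rewrite (_ : occurs a r.+1) ?andbT //; apply/existsP; exists ord0.
rewrite -(@sum_covering_value_range _ r ord0 r n.+1 w) //; last by move=> v; rewrite /w /=; lia.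
rewrite -big_split /=; apply: eq_bigr => a _.
case: (boolP (covering_word r a)) => //= /andP[/forallP word_a _].
by rewrite /low; have := ltn_ord (a ord0); have := word_a ord0; lia.
Qed.

Lemma count_covering_first_low :
  nwords (fun a => covering_word r.+1 a && low r (a ord0))
  = r * nwords (fun a => covering_word r.+1 a && (a ord0 == r.+1 :> nat)).
Proof.
pose w : 'I_n.+2 := Ordinal (le_rn : r.+1 < n.+2).
transitivity ((r - 0) * nwords (fun a => covering_word r.+1 a && (a ord0 == w))).
  apply: sum_covering_value_range => [|//|v /andP[_ le_vr]]; first exact: leqW.
  by rewrite /w /= leqnn (leqW le_vr).
by rewrite subn0; congr (_ * _); apply: eq_bigr => a _; rewrite -val_eqE.
Qed.

Lemma count_parking_with_run_eq_rook :
  nwords (parking_with_run r) = nwords (rook_with_run r).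
Proof.
have parking_count : N * nwords (parking_with_run r) + r * nwords (covering_word r)
                     = n.+1 * nwords (fun a => covering_word r a && low r (a ord0)).
  rewrite sum_parking_with_run // -(sum_covering_nlow r ord0) big_distrr -big_split /=.
  apply: eq_bigr => a _; case: (boolP (covering_word r a)) => [/andP[_ cov_a] | _] /=.
    by have := covers_nlow (leqW le_rn) cov_a; lia.
  by rewrite !mul0n muln0.
have rook_count : nwords (rook_with_run r)
                  + nwords (fun a => covering_word r.+1 a && low r (a ord0))
                  = nwords (fun a => covering_word r a && low r (a ord0)).
  by rewrite -big_split; apply: eq_bigr => a _; exact: rook_with_run_split.
move: parking_count rook_count.
rewrite count_covering_first_low_high count_covering_first_low.
set G := nwords (fun a => covering_word r a && low r (a ord0)).
set K := nwords (fun a => covering_word r.+1 a && (a ord0 == r.+1 :> nat)).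
(* As [n.+1 = N + r] and [N > 0], both counts equal [G - r * K]. *)
have : 0 < N by lia.
nia.
Qed.

End RookCount.

Lemma parking_with_full_run n (a : {ffun 'I_n.+1 -> 'I_n.+2}) :
  parking_with_run n.+1 a = rook_with_run n.+1 a.
Proof.
rewrite /parking_with_run /rook_with_run is_rook_wordE.
case: (eqVneq (run a) n.+1) => [run_a | _]; rewrite ?andbF // run_a -ltnS ltn_ord !andbT.
have cov_a : covers n.+1 a by rewrite -leq_run // run_a.
rewrite /is_parking; case: (boolP (is_word a)) => //= _.
apply/forallP => i; apply/implyP => _; have le_i := ltnSE (ltn_ord i).
exact: covers_card_le le_i (covers_le le_i cov_a).
Qed.

Lemma sum_Xrun_by_count n (P : {pred {ffun 'I_n -> 'I_n.+1}}) :
  (\sum_(a in P) 'X ^+ run a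
   = \sum_(r < n.+1) (\sum_a ((a \in P) && (run a == r)) : nat)%:R * 'X ^+ r :> {poly int})%R.
Proof.
rewrite (partition_big (fun a => inord (run a) : 'I_n.+1) xpredT) //=.
apply: eq_bigr => r _; rewrite (eq_bigr (fun=> 'X ^+ r)%R) => [|a /andP[_ /eqP <-]].
  rewrite sumr_const mulr_natl -sum1_card big_mkcond /=; congr (_ *+ _)%R.
  by apply: eq_bigr => a _; rewrite unfold_in -val_eqE /= inordK ?ltnS ?run_leq //; case: (_ && _).
by rewrite inordK // ltnS run_leq.
Qed.

Unset Implicit Arguments.
Local Open Scope ring_scope.

Theorem theorem4p11 (n : nat) : (0 < n)%N ->
  \sum_(a in PF n) ('X ^+ run a : {poly int})
  = \sum_(a in RW n) ('X ^+ run a : {poly int}).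
Proof.
case: n => // n _; rewrite !sum_Xrun_by_count; apply: eq_bigr => r _; congr (_%:R * _).
have [le_rn | lt_nr] := leqP r n.
  exact: count_parking_with_run_eq_rook le_rn.
have r_eq : (r : nat) = n.+1 by have := ltn_ord r; lia.
apply: eq_bigr => a _; rewrite !inE r_eq.
by rewrite -[is_parking a && _]/(parking_with_run n.+1 a) parking_with_full_run.
Qed.
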